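(* Let $k,n$ be integers with $n\geq 2$ and $k\geq 3$, and let $c$ be an exact $k$-coloring of $\mathcal{B}_n$. Then $\mathcal{B}_n$ contains no rainbow induced copy of $\mathcal{C}_3$ if and only if $c(\emptyset)=c([n])$ and, for any two sets $X,Y$ with $\emptyset\subsetneq X,Y\subsetneq[n]$ such that $c(X),c(Y),c(\emptyset)$ are pairwise distinct, $X$ and $Y$ are incomparable.
   Context: $\mathcal{B}_n$ denotes the Boolean lattice of all subsets of $[n]$ ordered by inclusion. An exact $k$-coloring of $\mathcal{B}_n$ is a map from $\mathcal{B}_n$ to $[k]$ that is surjective. A rainbow induced copy of $\mathcal{C}_3$ is a chain $X\subsetneq Y\subsetneq Z$ in $\mathcal{B}_n$ with $c(X),c(Y),c(Z)$ pairwise distinct. *)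

From mathcomp Require Import all_boot.
Set Implicit Arguments. Unset Strict Implicit. Unset Printing Implicit Defensive.

(* B_n = {set 'I_n} (subsets of [n]) ordered by inclusion; colors [k] = 'I_k. *)

Definition exact_coloring (n k : nat) (c : {set 'I_n} -> 'I_k) : Prop :=
  forall i : 'I_k, exists X : {set 'I_n}, c X = i.

(* rainbow induced copy of C_3: chain X < Y < Z with pairwise distinct colors *)
Definition rainbow_C3 (n k : nat) (c : {set 'I_n} -> 'I_k) (X Y Z : {set 'I_n}) : Prop :=
  [/\ X \proper Y, Y \proper Z, c X != c Y, c Y != c Z & c X != c Z].

Definition has_rainbow_C3 (n k : nat) (c : {set 'I_n} -> 'I_k) : Prop :=
  exists X Y Z, rainbow_C3 c X Y Z.

Definition incomparable (n : nat) (X Y : {set 'I_n}) : Prop :=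
  ~~ (X \subset Y) /\ ~~ (Y \subset X).

(* If c(∅) ≠ c([n]), a third colour (k ≥ 3) is taken by some W, and ∅ ⊊ W ⊊ [n] is a
   rainbow chain; likewise ∅ ⊊ X ⊊ Y is rainbow whenever X ⊆ Y and c(X), c(Y), c(∅) are
   pairwise distinct.  Conversely, in a rainbow chain at most one member has the colour
   c(∅) = c([n]); the other two are comparable, lie strictly between ∅ and [n], and have
   distinct colours different from c(∅). *)
From mathcomp Require Import all_boot.
From mathcomp Require Import zify.

Set Implicit Arguments.
Unset Strict Implicit.
Unset Printing Implicit Defensive.

Lemma exists_neq2 (T : finType) (a b : T) :
  2 < #|T| -> exists x, (x != a) && (x != b).
Proof.
move=> T3; have : 0 < #|~: [set a; b]|.
  by have := cardsC [set a; b]; rewrite cards2; lia.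
by rewrite card_gt0 => /set0Pn [x]; rewrite !inE negb_or; exists x.
Qed.

Section RainbowChains.

Variables (n k : nat) (c : {set 'I_n} -> 'I_k).

Lemma rainbow_from_set0 (A B : {set 'I_n}) :
  A \subset B -> c set0 != c A -> c A != c B -> c set0 != c B ->
  rainbow_C3 c set0 A B.
Proof.
move=> AB c0A cAB c0B; split=> //.
- by rewrite proper0; apply: contraNneq c0A => ->.
- by rewrite properEneq AB andbT; apply: contraNneq cAB => ->.
Qed.

Lemma no_rainbow_color_set0_setT :
  2 < k -> exact_coloring c -> ~ has_rainbow_C3 c -> c set0 = c setT.
Proof.
move=> k3 surj norb; apply/eqP/negP => /negP c0T.
have [d /andP [d0 dT]] : exists d : 'I_k, (d != c set0) && (d != c setT).
  by apply: exists_neq2; rewrite card_ord.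
have [W cW] := surj d; rewrite -cW in d0 dT.
apply: norb; exists set0, W, setT.
by apply: rainbow_from_set0; rewrite // eq_sym.
Qed.

Lemma no_rainbow_incomparable (X Y : {set 'I_n}) :
  ~ has_rainbow_C3 c -> c X != c Y -> c X != c set0 -> c Y != c set0 ->
  incomparable X Y.
Proof.
move=> norb cXY cX0 cY0.
suff noSub A B : c A != c B -> c A != c set0 -> c B != c set0 -> ~~ (A \subset B).
  by split; apply: noSub; rewrite // eq_sym.
move=> cAB cA0 cB0; apply/negP => AB; apply: norb.
by exists set0, A, B; apply: rainbow_from_set0; rewrite // eq_sym.
Qed.

Lemma rainbow_pair_avoiding (d : 'I_k) (X Y Z : {set 'I_n}) :
  rainbow_C3 c X Y Z ->
  exists A B : {set 'I_n}, [/\ A \proper B, c A != c B, c A != d & c B != d].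
Proof.
case=> XY YZ cXY cYZ cXZ; have XZ := proper_trans XY YZ.
have [<-|cXd] := eqVneq (c X) d; first by exists Y, Z; split; rewrite // eq_sym.
have [<-|cYd] := eqVneq (c Y) d; first by exists X, Z; split; rewrite // eq_sym.
by exists X, Y; split.
Qed.

Lemma proper_of_color_neq_set0 (A : {set 'I_n}) :
  c set0 = c setT -> c A != c set0 -> set0 \proper A /\ A \proper setT.
Proof.
move=> c0T cA0; rewrite proper0 properT; split.
- by apply: contraNneq cA0 => ->.
- by apply: contraNneq cA0 => ->; rewrite c0T.
Qed.

End RainbowChains.

Theorem theorem2p1 (n k : nat) (c : {set 'I_n} -> 'I_k) :
  2 <= n -> 3 <= k -> exact_coloring c ->
  (~ has_rainbow_C3 c <->
   (c set0 = c setT /\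
    forall X Y : {set 'I_n},
      set0 \proper X -> X \proper setT ->
      set0 \proper Y -> Y \proper setT ->
      c X != c Y -> c X != c set0 -> c Y != c set0 ->
      incomparable X Y)).
Proof.
move=> _ k3 surj; split.
- move=> norb; split; first exact: no_rainbow_color_set0_setT.
  by move=> X Y _ _ _ _; apply: no_rainbow_incomparable.
- case=> c0T inc [X [Y [Z rainbowXYZ]]].
  have [A [B [AB cAB cA0 cB0]]] := rainbow_pair_avoiding (c set0) rainbowXYZ.
  have [A0 AT] := proper_of_color_neq_set0 c0T cA0.
  have [B0 BT] := proper_of_color_neq_set0 c0T cB0.
  have [] := inc A B A0 AT B0 BT cAB cA0 cB0.
  by rewrite (proper_sub AB).
Qed.
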